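(* Let $n\ge1$, let $p$ be a prime and let $\ell(\mathbf{z})\in\mathbb{F}_p[\mathbf{z}]$ be a nonvanishing linear form in $n$ variables $\mathbf{z}=(z_1,\dots,z_n)$. For an $n\times n$ matrix of variables $\mathbf{X}=(\mathbf{z}\mid\mathbf{Z})$ (first column $\mathbf{z}$, remaining columns $\mathbf{Z}$) put $L(\mathbf{X})=\ell(\mathbf{z})$. Then \[ S_p(L)=\sum_{\substack{\mathbf{X}\in\mathbb{F}_p^{n\times n}\\ \det\mathbf{X}=0}}\exp\left(2\pi i\,L(\mathbf{X})/p\right)\ll p^{n^2-n}, \] where the implied constant depends only on $n$.
   Context: Here $L(\mathbf{X})\in\mathbb{F}_p$ is identified with an integer in $\{0,\dots,p-1\}$ in the exponential. *)

From Stdlib Require Import Reals.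
From HB Require Import structures.
From mathcomp Require Import all_boot all_order all_algebra.
From mathcomp Require Import Rstruct.
Set Implicit Arguments. Unset Strict Implicit. Unset Printing Implicit Defensive.
Import Order.TTheory GRing.Theory Num.Theory.
Local Open Scope ring_scope.

Definition Lform (n : nat) (hn : (0 < n)%N) (p : nat) (a : 'rV['F_p]_n)
  (X : 'M['F_p]_n) : 'F_p := \sum_(i < n) a 0 i * X i (Ordinal hn).

(* Real and imaginary parts of S_p(L) = sum_{det X = 0} exp(2 pi i L(X)/p),
   with L(X) identified with its representative in {0,...,p-1}. *)
Definition Sp_re (n : nat) (hn : (0 < n)%N) (p : nat) (a : 'rV['F_p]_n) : R :=
  \sum_(X : 'M['F_p]_n | \det X == 0)
     cos (2 * PI * (nat_of_ord (Lform hn a X))%:R / p%:R).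

Definition Sp_im (n : nat) (hn : (0 < n)%N) (p : nat) (a : 'rV['F_p]_n) : R :=
  \sum_(X : 'M['F_p]_n | \det X == 0)
     sin (2 * PI * (nat_of_ord (Lform hn a X))%:R / p%:R).

Definition Sp_abs (n : nat) (hn : (0 < n)%N) (p : nat) (a : 'rV['F_p]_n) : R :=
  sqrt (Sp_re hn a ^+ 2 + Sp_im hn a ^+ 2).

From Stdlib Require Import Reals.
From HB Require Import structures.
From mathcomp Require Import all_boot all_order all_algebra.
From mathcomp Require Import Rstruct.
From mathcomp Require Import ring lra.

(* Split the sum according to the first column u of X and let N(u) count the
   singular X with that column.  GL_n acts transitively on nonzero columns and
   preserves singularity, so N(u) = N(e_1) for all u <> 0.  Since a <> 0 and
   the p-th roots of unity sum to 0, u |-> exp(2 pi i l(u) / p) sums to 0 over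
   all u, and the sum collapses to N(0) - N(e_1).  Both counts are at most
   p^(n^2-n), since X is determined by its first column and n - 1 others. *)

Set Implicit Arguments.
Unset Strict Implicit.
Unset Printing Implicit Defensive.
Import Order.TTheory GRing.Theory Num.Theory.
Local Open Scope ring_scope.

(* The arguments of sin and cos are parsed in Stdlib's R_scope; %R selects
   MathComp's ring_scope instead. *)
Lemma sinN (x : R) : sin ((- x)%R) = - sin x. Proof. exact: sin_neg. Qed.
Lemma cosN (x : R) : cos ((- x)%R) = cos x. Proof. exact: cos_neg. Qed.

Lemma sin_mul_cos (t x : R) : 2 * sin t * cos x = sin ((x + t)%R) - sin ((x - t)%R).
Proof. by rewrite !sinD sinN cosN; ring. Qed.

Lemma sin_mul_sin (t x : R) : 2 * sin t * sin x = cos ((x - t)%R) - cos ((x + t)%R).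
Proof. by rewrite !cosD sinN cosN; ring. Qed.

Lemma sum_cos_arith (t : R) (m : nat) :
  2 * sin t * \sum_(k < m) cos ((k%:R * (2 * t))%R) =
  sin (((2 * m%:R - 1) * t)%R) + sin t.
Proof.
elim: m => [|m IHm]; first by rewrite big_ord0 !mulr0 sub0r mulN1r sinN addNr.
rewrite big_ord_recr /= mulrDr IHm sin_mul_cos.
have -> : m%:R * (2 * t) + t = (2 * m.+1%:R - 1) * t by rewrite -natr1; ring.
have -> : m%:R * (2 * t) - t = (2 * m%:R - 1) * t by ring.
by ring.
Qed.

Lemma sum_sin_arith (t : R) (m : nat) :
  2 * sin t * \sum_(k < m) sin ((k%:R * (2 * t))%R) =
  cos t - cos (((2 * m%:R - 1) * t)%R).
Proof.
elim: m => [|m IHm]; first by rewrite big_ord0 !mulr0 sub0r mulN1r cosN subrr.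
rewrite big_ord_recr /= mulrDr IHm sin_mul_sin.
have -> : m%:R * (2 * t) + t = (2 * m.+1%:R - 1) * t by rewrite -natr1; ring.
have -> : m%:R * (2 * t) - t = (2 * m%:R - 1) * t by ring.
by ring.
Qed.

Section RootsOfUnity.
Variables (p : nat) (p_gt1 : (1 < p)%N).

Let t : R := PI / p%:R.

Let two_sin_t_neq0 : 2 * sin t != 0.
Proof.
rewrite mulf_neq0 ?pnatr_eq0 //; apply/eqP/Rgt_not_eq/sin_gt_0; apply/RltP.
  by rewrite divr_gt0 ?ltr0n ?(ltnW p_gt1) //; apply/RltP/PI_RGT_0.
rewrite ltr_pdivrMr ?ltr0n ?(ltnW p_gt1) // ltr_pMr ?ltr1n //; apply/RltP/PI_RGT_0.
Qed.

Let cos_angleE (k : nat) : cos (2 * PI * k%:R / p%:R) = cos ((k%:R * (2 * t))%R).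
Proof. by congr cos; rewrite /t !RealsE /=; ring. Qed.

Let sin_angleE (k : nat) : sin (2 * PI * k%:R / p%:R) = sin ((k%:R * (2 * t))%R).
Proof. by congr sin; rewrite /t !RealsE /=; ring. Qed.

Let last_angleE : ((2 * p%:R - 1) * t)%R = 2 * PI - t.
Proof. by rewrite /t !RealsE /=; field; rewrite pnatr_eq0 -lt0n ltnW. Qed.

Lemma sum_cos_2PI_div : \sum_(k < p) cos (2 * PI * k%:R / p%:R) = 0.
Proof.
apply: (mulfI two_sin_t_neq0); under eq_bigr do rewrite cos_angleE.
rewrite sum_cos_arith mulr0 last_angleE sin_minus sin_2PI cos_2PI.
by rewrite !RealsE /=; ring.
Qed.

Lemma sum_sin_2PI_div : \sum_(k < p) sin (2 * PI * k%:R / p%:R) = 0.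
Proof.
apply: (mulfI two_sin_t_neq0); under eq_bigr do rewrite sin_angleE.
rewrite sum_sin_arith mulr0 last_angleE cos_minus sin_2PI cos_2PI.
by rewrite !RealsE /=; ring.
Qed.

End RootsOfUnity.

Section LinearFormSum.
Variables (F : finFieldType) (K : numDomainType) (n : nat).

Lemma sum_linear_form_eq0 (a : 'rV[F]_n) (g : F -> K) :
  a != 0 -> \sum_s g s = 0 -> \sum_(u : 'cV[F]_n) g ((a *m u) 0 0) = 0.
Proof.
move=> a_neq0 sum_g0.
have [i ai_neq0] : exists i, a 0 i != 0.
  apply/existsP; apply: contraR a_neq0; rewrite negb_exists => /forallP a0.
  by apply/eqP/matrixP => r j; rewrite (ord1 r) mxE; exact/eqP/negPn/a0.
pose v t : 'cV[F]_n := (t / a 0 i) *: delta_mx i 0.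
have form_shift u t : (a *m (u + v t)) 0 0 = (a *m u) 0 0 + t.
  rewrite mulmxDr mxE; congr (_ + _).
  by rewrite /v -scalemxAr mxE -colE mxE divfK.
set S := \sum_u _.
(* Translating u by v t shifts the form by t; summing over t gives
   #|F| * S = \sum_u \sum_t g ((a *m u) 0 0 + t) = 0. *)
have S_shift t : S = \sum_(u : 'cV[F]_n) g ((a *m u) 0 0 + t).
  rewrite /S (reindex_inj (addIr (v t))) /=.
  by apply: eq_bigr => u _; rewrite form_shift.
have : #|F|%:R * S = 0.
  rewrite mulr_natl -sumr_const (eq_bigr _ (fun t _ => S_shift t)) exchange_big.
  rewrite big1 //= => u _.
  by rewrite -[RHS]sum_g0 [RHS](reindex_inj (addrI ((a *m u) 0 0))); apply: eq_bigl.
have card_F_gt0 : (0 < #|F|)%N by apply/card_gt0P; exists 0.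
by move/eqP; rewrite mulf_eq0 pnatr_eq0 eqn0Ngt card_F_gt0 => /eqP.
Qed.
End LinearFormSum.

Section SingularByColumn.
Variables (F : finFieldType) (n : nat) (i0 : 'I_n).

Definition singular_col (u : 'cV[F]_n) : {set 'M[F]_n} :=
  [set X | (\det X == 0) && (col i0 X == u)].

Lemma unitmx_transitive (u v : 'cV[F]_n) :
  u != 0 -> v != 0 -> exists2 G, G \in unitmx & u = G *m v.
Proof.
have full (w : 'cV[F]_n) : w != 0 -> row_full w.
  by move=> w_neq0; rewrite /row_full eqn_leq rank_leq_col /= lt0n mxrank_eq0.
by move=> /full u_full /full v_full; apply/eqmxMunitP; rewrite !submx_full.
Qed.

Lemma card_singular_colM (G : 'M[F]_n) (u : 'cV[F]_n) :
  G \in unitmx -> #|singular_col (G *m u)| = #|singular_col u|.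
Proof.
move=> G_unit; rewrite -[RHS](card_preimset _ (can_inj (mulKVmx G_unit))).
have det_invG_neq0 : \det (invmx G) != 0 by rewrite -unitfE -unitmxE unitmx_inv.
apply: eq_card => X; rewrite !inE det_mulmx mulf_eq0 (negbTE det_invG_neq0) /=.
rewrite [col _ (_ *m _)]colE -mulmxA -colE.
by rewrite (can2_eq (mulKVmx G_unit) (mulKmx G_unit)).
Qed.

Lemma card_singular_col_eq (u v : 'cV[F]_n) :
  u != 0 -> v != 0 -> #|singular_col u| = #|singular_col v|.
Proof.
by move=> u_neq0 v_neq0; have [G G_unit ->] := unitmx_transitive u_neq0 v_neq0;
  rewrite card_singular_colM.
Qed.

Lemma card_singular_col_le (u : 'cV[F]_n) :
  (#|singular_col u| <= #|F| ^ (n * n.-1))%N.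
Proof.
rewrite -card_mx; apply: (@leq_card_in _ _ (col' i0)).
move=> X Y; rewrite !inE => /andP [_ /eqP X_u] /andP [_ /eqP Y_u] X'_Y'.
apply/matrixP => i j; have [k ->|->] := unliftP i0 j.
  by have := congr1 (fun M : 'M[F]_(n, n.-1) => M i k) X'_Y'; rewrite !mxE.
by have := congr1 (fun w : 'cV[F]_n => w i 0) (etrans X_u (esym Y_u)); rewrite !mxE.
Qed.

Variable K : numDomainType.

Lemma sum_singular_by_col (h : 'cV[F]_n -> K) :
  \sum_(X : 'M[F]_n | \det X == 0) h (col i0 X) = \sum_u h u *+ #|singular_col u|.
Proof.
rewrite (partition_big (col i0) xpredT) //=; apply: eq_bigr => u _.
rewrite -sumr_const; apply: eq_big => [X|X]; first by rewrite inE.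
by move=> /andP [_ /eqP ->].
Qed.

Lemma sum_singular_linear_form (a : 'rV[F]_n) (e : 'cV[F]_n) (g : F -> K) :
  a != 0 -> e != 0 -> \sum_s g s = 0 ->
  \sum_(X : 'M[F]_n | \det X == 0) g ((a *m col i0 X) 0 0) =
  g 0 * (#|singular_col 0|%:R - #|singular_col e|%:R).
Proof.
move=> a_neq0 e_neq0 sum_g0; pose h (u : 'cV[F]_n) := g ((a *m u) 0 0).
have h0 : h 0 = g 0 by rewrite /h mulmx0 mxE.
have sum_h_nz : \sum_(u | u != 0) h u = - g 0.
  have := sum_linear_form_eq0 a_neq0 sum_g0; rewrite (bigD1 0) //= -/(h 0) h0.
  by move=> /eqP; rewrite addrC addr_eq0 => /eqP.
rewrite (sum_singular_by_col h) (bigD1 0) //= h0.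
rewrite (eq_bigr (fun u => h u *+ #|singular_col e|)) => [|u u_neq0]; last first.
  by rewrite (card_singular_col_eq u_neq0 e_neq0).
by rewrite sumrMnl sum_h_nz mulrBr !mulr_natr mulNrn.
Qed.

End SingularByColumn.

Lemma ler_norm_sub_nonneg (K : realDomainType) (x y c : K) :
  0 <= x <= c -> 0 <= y <= c -> `|x - y| <= c.
Proof.
move=> /andP [x_ge0 x_le] /andP [y_ge0 y_le].
by rewrite ler_norml; apply/andP; split; lra.
Qed.

Lemma sum_Fp_nat (V : nmodType) (p : nat) (f : nat -> V) :
  prime p -> \sum_(s : 'F_p) f s = \sum_(k < p) f k.
Proof. by move=> p_prime; rewrite -(big_mkord xpredT f) Fp_cast // big_mkord. Qed.

Lemma LformE (n : nat) (hn : (0 < n)%N) (p : nat) (a : 'rV['F_p]_n) (X : 'M['F_p]_n) :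
  Lform hn a X = (a *m col (Ordinal hn) X) 0 0.
Proof. by rewrite /Lform mxE; apply: eq_bigr => j _; rewrite mxE. Qed.

Section ExponentialSum.
Variables (n : nat) (hn : (0 < n)%N) (p : nat) (p_prime : prime p).
Variables (a : 'rV['F_p]_n) (a_neq0 : a != 0).

Let i0 := Ordinal hn.
Let e : 'cV['F_p]_n := delta_mx i0 0.
Let p_gt1 := prime_gt1 p_prime.

Let e_neq0 : e != 0.
Proof.
apply: contraTneq isT => /matrixP/(_ i0 0).
by rewrite !mxE !eqxx => /eqP; rewrite oner_eq0.
Qed.

Lemma Sp_reE :
  Sp_re hn a = #|singular_col i0 (0 : 'cV['F_p]_n)|%:R - #|singular_col i0 e|%:R.
Proof.
rewrite /Sp_re; under eq_bigr do rewrite LformE.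
pose g (s : 'F_p) := cos (2 * PI * (s : nat)%:R / p%:R).
rewrite (sum_singular_linear_form i0 (g := g) a_neq0 e_neq0); last first.
  rewrite (sum_Fp_nat (fun k => cos (2 * PI * k%:R / p%:R)) p_prime).
  exact: sum_cos_2PI_div p_gt1.
by rewrite /g /= RdivE RmultE mulr0 mul0r cos_0 mul1r.
Qed.

Lemma Sp_im_eq0 : Sp_im hn a = 0.
Proof.
rewrite /Sp_im; under eq_bigr do rewrite LformE.
pose g (s : 'F_p) := sin (2 * PI * (s : nat)%:R / p%:R).
rewrite (sum_singular_linear_form i0 (g := g) a_neq0 e_neq0); last first.
  rewrite (sum_Fp_nat (fun k => sin (2 * PI * k%:R / p%:R)) p_prime).
  exact: sum_sin_2PI_div p_gt1.
by rewrite /g /= RdivE RmultE mulr0 mul0r sin_0 mul0r.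
Qed.

Lemma Sp_abs_le : Sp_abs hn a <= p%:R ^+ (n * n - n).
Proof.
have N_bound (u : 'cV['F_p]_n) :
    0 <= (#|singular_col i0 u|%:R : R) <= p%:R ^+ (n * n - n).
  rewrite ler0n -natrX ler_nat (leq_trans (card_singular_col_le i0 u)) //.
  by rewrite card_Fp // -subn1 mulnBr muln1.
rewrite /Sp_abs Sp_reE Sp_im_eq0 RplusE RsqrtE expr0n /= addr0 sqrtr_sqr.
move: (N_bound 0) (N_bound e); apply: ler_norm_sub_nonneg.
Qed.

End ExponentialSum.

Theorem lemma3p4 : forall (n : nat) (hn : (0 < n)%N), exists C : R,
  forall (p : nat), prime p -> forall a : 'rV['F_p]_n, a != 0 ->
    Sp_abs hn a <= C * (p%:R : R) ^+ (n * n - n).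
Proof.
move=> n hn; exists 1 => p p_prime a a_neq0; rewrite mul1r.
exact: Sp_abs_le.
Qed.
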